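(* For every $\varepsilon>0$ there exists $n_0$ such that for all $n\ge n_0$ the following holds. Let $\mathcal F\subseteq 2^{[n]}$ be a family all of whose sets have size in $[n/2-n^{2/3},\,n/2+n^{2/3}]$. If for every $F\in\mathcal F$ we have (i) $\nabla^1_{\mathcal F}(F)\le\varepsilon n$ and (ii) $\nabla^j_{\mathcal F}(F)\le\varepsilon n^2$ for all $j\ge2$, then $|\mathcal F|\le(1+15\varepsilon)\binom{n}{\lfloor n/2\rfloor}$.
   Context: $\nabla^j_{\mathcal F}(F):=|\{G\in\mathcal F:\ F\subseteq G,\ |G|=|F|+j\}|$. *)

From mathcomp Require Import all_boot all_order all_algebra.
Set Implicit Arguments. Unset Strict Implicit. Unset Printing Implicit Defensive.

Definition nabla (n : nat) (F : {set {set 'I_n}}) (j : nat) (S : {set 'I_n}) : nat :=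
  #|[set G in F | (S \subset G) && (#|G| == #|S| + j)%N]|.

(* A weighted LYM inequality. For a uniformly random maximal chain of subsets
   of [n], the events "the first member of F met by the chain is H" (H in F)
   are disjoint. A chain through S meets F first either at S or at some H in F
   strictly below S, which gives
     1 / C(n, |S|) = first_hit S + sum_(H in F, H < S) first_hit H / C(n - |H|, |S| - |H|).
   Summing over S in F yields sum_(S in F) 1 / C(n, |S|) <= 1 + c, where c bounds
   sum_(G in F, G > H) 1 / C(n - |H|, |G| - |H|) = sum_j nabla^j(H) / C(n - |H|, j)
   for every H in F. All sets of F lie within n/80 of n/2, so only j <= n/40
   contribute and n - |H| is about n/2; the hypotheses then give c = 15 eps. *)

From mathcomp Require Import all_boot all_order all_algebra.
From mathcomp Require Import reals zify lra.
Set Implicit Arguments. Unset Strict Implicit. Unset Printing Implicit Defensive.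
Import Order.TTheory GRing.Theory Num.Theory.

Lemma leq_bin2r m i j : i <= j -> 2 * j <= m -> 'C(m, i) <= 'C(m, j).
Proof.
move=> /subnK <-; elim: (j - i) => [|d IHd] le_m //=.
apply: leq_trans (IHd _) _; first lia.
rewrite addSn -(leq_pmul2l (ltn0Sn (d + i))) mul_bin_left.
by apply: leq_mul => //; lia.
Qed.

Lemma leq_bin_half m k : 'C(m, k) <= 'C(m, m./2).
Proof.
have m_half := odd_double_half m; have odd_le1 : odd m <= 1 by case: odd.
have [le_k_half | lt_half_k] := leqP k m./2; first by apply: leq_bin2r; lia.
have [le_km | lt_mk] := leqP k m; last by rewrite bin_small.
by rewrite -bin_sub //; apply: leq_bin2r; lia.
Qed.

Lemma sqr_le_bin2 m n : 39 * n <= 80 * m -> 100 <= m -> n ^ 2 <= 10 * 'C(m, 2).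
Proof. by move=> le_nm le_100m; have := mul_bin_left m 1; rewrite bin1; nia. Qed.

Lemma cube_le_bin3 m n : 39 * n <= 80 * m -> 100 <= m ->
  n %/ 40 * n ^ 2 <= 2 * 'C(m, 3).
Proof.
move=> le_nm le_100m; have := sqr_le_bin2 le_nm le_100m.
have := mul_bin_left m 2; have := mul_bin_left m 1; rewrite bin1.
by have := leq_divM n 40; nia.
Qed.

Lemma leq_mul_of_cube_le K n d : 8 * K ^ 3 <= n -> d ^ 3 <= 8 * n ^ 2 -> K * d <= n.
Proof.
move=> le_Kn le_dn; rewrite -(leq_exp2r _ _ (ltn0Sn 2)) expnMn.
apply: leq_trans (leq_mul (leqnn _) le_dn) _.
by rewrite mulnA [K ^ 3 * 8]mulnC (expnS n 2) leq_mul.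
Qed.

Local Open Scope ring_scope.

Lemma window_ratio n s : (8 * 40 ^ 3 <= n)%N ->
  `|(2 * s)%:Z - n%:Z| ^+ 3 <= (8 * n ^ 2)%:Z ->
  (80 * s <= 41 * n)%N /\ (39 * n <= 80 * s)%N.
Proof.
move=> n_large; rewrite -abszE -natz -natrX natz lez_nat.
by move/(leq_mul_of_cube_le n_large); lia.
Qed.

Section SubsetSums.

Variables (R : nmodType) (T : finType) (F : {set {set T}}).

Lemma big_subset_proper (A : {set T}) (f : {set T} -> R) :
  \sum_(H in F | H \subset A) f H =
  \sum_(H in F | H \proper A) f H + (if A \in F then f A else 0).
Proof.
have [AF|AF] := boolP (A \in F).
  rewrite (bigD1 A) ?AF ?subxx //= addrC; congr (_ + _).
  by apply: eq_bigl => H; rewrite properEneq -andbA [_ && (_ != _)]andbC.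
rewrite addr0; apply: eq_bigl => H; rewrite properEneq.
by case: eqP => [->|_]; rewrite ?(negPf AF).
Qed.

Lemma exchange_big_setD1 (S : {set T}) (g : {set T} -> T -> R) :
  \sum_(x in S) \sum_(H in F | H \subset S :\ x) g H x =
  \sum_(H in F | H \proper S) \sum_(x in S :\: H) g H x.
Proof.
rewrite (exchange_big_dep (fun H => (H \in F) && (H \proper S))) /=; last first.
  by move=> x H xS /andP[-> HSx]; apply: sub_proper_trans HSx (properD1 xS).
apply: eq_bigr => H /andP[HF ltHS]; apply: eq_bigl => x.
by rewrite subsetD1 !inE HF (proper_sub ltHS) /= andbC.
Qed.

End SubsetSums.

Section ChainWeights.

Variables (R : numFieldType) (n : nat).
Implicit Types (F : {set {set 'I_n}}) (H S : {set 'I_n}).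

Lemma leq_card_ord S : (#|S| <= n)%N.
Proof. by rewrite -[X in (_ <= X)%N]card_ord max_card. Qed.

Lemma cardsD1_succ x S k : x \in S -> #|S| = k.+1 -> #|S :\ x| = k.
Proof. by move=> xS /eqP; rewrite (cardsD1 x) xS add1n eqSS => /eqP. Qed.

(* The probability that a uniformly random maximal chain through [H] also
   passes through [S], for [H \subset S]. *)
Definition pass_prob H S : R := ('C(n - #|H|, #|S| - #|H|))%:R^-1.

(* [first_hit F S] is the probability that a random maximal chain passes
   through [S] and meets [F] nowhere strictly below [S]. Such a chain arrives
   from some [S :\ x] not in [F], and a chain through a [k]-set continues to
   each of its [n - k] one-element extensions with equal probability. *)
Fixpoint first_hit_rec F (k : nat) (S : {set 'I_n}) : R :=
  match k with
  | 0 => (S == set0)%:R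
  | k'.+1 => (n - k')%:R^-1 *
      \sum_(x in S) (if S :\ x \in F then 0 else first_hit_rec F k' (S :\ x))
  end.

Definition first_hit F S := first_hit_rec F #|S| S.

Lemma first_hit_ge0 F S : 0 <= first_hit F S.
Proof.
rewrite /first_hit; move: #|S| => k; elim: k S => [|k IHk] S /=; first exact: ler0n.
rewrite mulr_ge0 ?invr_ge0 ?ler0n ?sumr_ge0 // => x _.
by case: ifP => // _; apply: IHk.
Qed.

Lemma first_hitE F S k : #|S| = k.+1 ->
  first_hit F S = (n - k)%:R^-1 *
    \sum_(x in S) (if S :\ x \in F then 0 else first_hit F (S :\ x)).
Proof.
move=> cardS; rewrite /first_hit cardS /=; congr (_ * _).
by apply: eq_bigr => x xS; rewrite (cardsD1_succ xS cardS).
Qed.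

Lemma pass_prob_id S : pass_prob S S = 1.
Proof. by rewrite /pass_prob subnn bin0 invr1. Qed.

(* A chain through [H] reaches [S] through exactly one [S :\ x] with [x \notin H],
   and from there adds [x] with probability [1 / (n - k)]. *)
Lemma pass_prob_step H S k : H \proper S -> #|S| = k.+1 ->
  (n - k)%:R * pass_prob H S = \sum_(x in S :\: H) pass_prob H (S :\ x).
Proof.
move=> ltHS cardS; have leHS := proper_sub ltHS.
have le_Hk : (#|H| <= k)%N by rewrite -ltnS -cardS proper_card.
have lt_kn : (k < n)%N by rewrite -cardS leq_card_ord.
rewrite (eq_bigr (fun=> ('C(n - #|H|, k - #|H|))%:R^-1)); last first.
  by move=> x /setDP[xS _]; rewrite /pass_prob (cardsD1_succ xS cardS).
rewrite sumr_const cardsD (setIidPr leHS) cardS /pass_prob -[RHS]mulr_natl.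
have binS : ((k.+1 - #|H|) * 'C(n - #|H|, k.+1 - #|H|) =
             (n - k) * 'C(n - #|H|, k - #|H|))%N.
  by rewrite subSn // mul_bin_left; congr (_ * _); lia.
apply/eqP; rewrite cardS eqr_div ?pnatr_eq0 -?lt0n ?bin_gt0 ?leq_sub2r // 1?ltnW //.
by rewrite -!natrM mulnC binS mulnC.
Qed.

Lemma pass_prob0_first_hit F S :
  pass_prob set0 S =
  first_hit F S + \sum_(H in F | H \proper S) first_hit F H * pass_prob H S.
Proof.
move: {2}#|S| (erefl #|S|) => k; elim: k S => [|k IHk] S cardS.
  rewrite (cards0_eq cardS) /first_hit pass_prob_id cards0 /= eqxx big1 ?addr0 //.
  by move=> H /andP[_]; rewrite properEcard cards0 ltn0 andbF.
have lt_kn : (k < n)%N by rewrite -cardS leq_card_ord.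
have nk_neq0 : (n - k)%:R != 0 :> R by rewrite pnatr_eq0 subn_eq0 -ltnNge.
have lt0S : set0 \proper S by rewrite proper0 -cards_eq0 cardS.
have IHS x : x \in S -> pass_prob set0 (S :\ x) =
    (if S :\ x \in F then 0 else first_hit F (S :\ x)) +
    \sum_(H in F | H \subset S :\ x) first_hit F H * pass_prob H (S :\ x).
  move=> xS; rewrite (IHk _ (cardsD1_succ xS cardS)) big_subset_proper pass_prob_id mulr1.
  by case: ifP => _; rewrite ?add0r ?addr0 // addrC.
apply: (mulfI nk_neq0).
rewrite (pass_prob_step lt0S cardS) setD0 (eq_bigr _ IHS) big_split /=.
rewrite mulrDr (first_hitE _ cardS) mulrA mulfV // mul1r exchange_big_setD1.
congr (_ + _); rewrite mulr_sumr; apply: eq_bigr => H /andP[_ ltHS].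
by rewrite mulrCA (pass_prob_step ltHS cardS) mulr_sumr.
Qed.

Lemma sum_first_hit_le1 F : \sum_(H in F) first_hit F H <= 1.
Proof.
have pass_setT H : pass_prob H setT = 1.
  by rewrite /pass_prob cardsT card_ord binn invr1.
have := pass_prob0_first_hit F setT; rewrite pass_setT.
under eq_bigr do rewrite pass_setT mulr1.
move=> ->; rewrite (eq_bigl (fun H => (H \in F) && (H \subset setT))); last first.
  by move=> H; rewrite subsetT andbT.
rewrite big_subset_proper addrC lerD2r.
by case: ifP => _; [exact: lexx | exact: first_hit_ge0].
Qed.

Lemma sum_pass_prob0_le F (c : R) : 0 <= c ->
  (forall H, H \in F -> \sum_(G in F | H \proper G) pass_prob H G <= c) ->
  \sum_(S in F) pass_prob set0 S <= 1 + c.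
Proof.
move=> c_ge0 above_le.
under eq_bigr do rewrite (pass_prob0_first_hit F).
rewrite big_split /= (exchange_big_dep (mem F)) /=; last by move=> ? ? ? /andP[].
have above_hit H : H \in F ->
    \sum_(S | (S \in F) && ((H \in F) && (H \proper S)))
      first_hit F H * pass_prob H S <= first_hit F H * c.
  move=> HF; rewrite -mulr_sumr ler_wpM2l ?first_hit_ge0 //.
  by under eq_bigl do rewrite HF; exact: above_le.
apply: le_trans (lerD (lexx _) (ler_sum _ above_hit)) _.
rewrite -big_split /=; under eq_bigr do rewrite -[X in X + _]mulr1 -mulrDr.
rewrite -mulr_suml ler_piMl ?addr_ge0 //; exact: sum_first_hit_le1.
Qed.

Lemma sum_pass_prob_nabla F H :
  \sum_(G in F | H \proper G) pass_prob H G =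
  \sum_(1 <= j < n.+1) (nabla F j H)%:R / ('C(n - #|H|, j))%:R.
Proof.
pose gap (G : {set 'I_n}) : 'I_n.+1 := inord (#|G| - #|H|).
have gapE (G : {set 'I_n}) (j : 'I_n.+1) : (gap G == j) = (#|G| - #|H| == j)%N.
  by rewrite -(inj_eq val_inj) /= inordK // ltnS (leq_trans (leq_subr _ _)) ?leq_card_ord.
rewrite (partition_big gap xpredT) //= big_ord_recl big_add1 big_mkord /=.
rewrite big1 ?add0r => [|G /andP[/andP[_ ltHG]]]; last first.
  by rewrite gapE /= subn_eq0 leqNgt proper_card.
apply: eq_bigr => j _; rewrite (eq_bigr (fun=> ('C(n - #|H|, j.+1))%:R^-1)); last first.
  by move=> G /andP[_]; rewrite gapE lift0 /pass_prob => /eqP ->.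
rewrite sumr_const -[LHS]mulr_natl; congr (_%:R * _); apply: eq_card => G.
rewrite !inE unfold_in /= gapE lift0 properEcard.
case: (G \in F); case: (H \subset G) => //=.
by apply/andP/eqP => [[? /eqP] | ?]; [lia | split; [lia | apply/eqP; lia]].
Qed.

End ChainWeights.

Arguments pass_prob {R n} H S.

Lemma card_le_sum_pass_prob0 (R : realFieldType) n (F : {set {set 'I_n}}) :
  #|F|%:R <= (\sum_(S in F) pass_prob set0 S) * ('C(n, n./2))%:R :> R.
Proof.
have bin_half_gt0 : (0 < 'C(n, n./2))%N by rewrite bin_gt0; lia.
rewrite -ler_pdivrMr ?ltr0n // mulr_natl -sumr_const; apply: ler_sum => S _.
have bin_gt0S : (0 < 'C(n, #|S|))%N by rewrite bin_gt0 leq_card_ord.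
by rewrite /pass_prob cards0 !subn0 lef_pV2 ?posrE ?ltr0n // ler_nat leq_bin_half.
Qed.

Lemma ler_scale_div (R : numFieldType) (e x b c : R) :
  0 <= e -> 0 < b -> x <= c * b -> e * x / b <= e * c.
Proof. by move=> e_ge0 b_gt0 le_xb; rewrite ler_pdivrMr // -mulrA ler_wpM2l. Qed.

Section NablaBounds.

Variables (R : realFieldType) (eps : R) (n : nat) (F : {set {set 'I_n}}).
Hypothesis eps_gt0 : 0 < eps.
Hypothesis n_large : (1000 <= n)%N.
Hypothesis F_window : forall S, S \in F -> (80 * #|S| <= 41 * n)%N /\ (39 * n <= 80 * #|S|)%N.

Lemma nabla_eq0_far H j : H \in F -> (n < 40 * j)%N -> nabla F j H = 0%N.
Proof.
move=> HF lt_n40j; apply/eqP; rewrite cards_eq0; apply/eqP/setP => G; rewrite !inE.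
apply/negP => /and3P[GF _ /eqP cardG].
by have := F_window HF; have := F_window GF; lia.
Qed.

Lemma sum_pass_prob_above_le H : H \in F ->
  (nabla F 1 H)%:R <= eps * n%:R ->
  (forall j, (2 <= j)%N -> (nabla F j H)%:R <= eps * n%:R ^+ 2) ->
  \sum_(G in F | H \proper G) pass_prob H G <= 15 * eps.
Proof.
move=> HF nabla1 nablaj; rewrite sum_pass_prob_nabla.
have [le_H41 le_H39] := F_window HF; set m := (n - #|H|)%N.
have le_nm : (39 * n <= 80 * m)%N by lia.
have le_100m : (100 <= m)%N by lia.
rewrite big_ltn; last lia.
rewrite big_ltn; last lia.
have term1 : (nabla F 1 H)%:R / ('C(m, 1))%:R <= eps * 3.
  rewrite bin1; apply: le_trans (ler_wpM2r _ nabla1) _; first by rewrite invr_ge0.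
  by apply: ler_scale_div; [exact: ltW | rewrite ltr0n; lia | rewrite -natrM ler_nat; lia].
have term2 : (nabla F 2 H)%:R / ('C(m, 2))%:R <= eps * 10.
  apply: le_trans (ler_wpM2r _ (nablaj 2 _)) _ => //; first by rewrite invr_ge0.
  apply: ler_scale_div; [exact: ltW | rewrite ltr0n bin_gt0; lia |].
  by rewrite -natrX -natrM ler_nat sqr_le_bin2.
set J := (n %/ 40)%N.
have tail : \sum_(3 <= j < n.+1) (nabla F j H)%:R / ('C(m, j))%:R <= eps * 2.
  have far_zero : \sum_(J.+1 <= j < n.+1) (nabla F j H)%:R / ('C(m, j))%:R = 0 :> R.
    rewrite big_nat big1 // => j /andP[lt_Jj _].
    by rewrite nabla_eq0_far ?mul0r //; lia.
  rewrite (big_cat_nat (n := J.+1)) /= ?far_zero ?addr0; [|lia|lia].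
  apply: (@le_trans _ _ (\sum_(3 <= j < J.+1) eps * n%:R ^+ 2 / ('C(m, 3))%:R)).
    rewrite !big_nat; apply: ler_sum => j /andP[le_3j lt_jJ].
    apply: ler_pM; [exact: ler0n | by rewrite invr_ge0 | by apply: nablaj; lia |].
    rewrite lef_pV2 ?posrE ?ltr0n ?bin_gt0 ?ler_nat; [apply: leq_bin2r | |]; lia.
  rewrite sumr_const_nat -[X in X <= _]mulr_natr mulrAC -[eps * _ * _]mulrA.
  apply: ler_scale_div; [exact: ltW | rewrite ltr0n bin_gt0; lia |].
  rewrite -natrX -!natrM ler_nat; apply: leq_trans (cube_le_bin3 le_nm le_100m).
  by rewrite mulnC leq_mul //; lia.
lra.
Qed.

End NablaBounds.

(* |2|S| - n|^3 <= 8 n^2 is the window |S| in [n/2 - n^(2/3), n/2 + n^(2/3)]. *)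
Theorem lemma2p4 (R : realType) (eps : R) : 0 < eps ->
  exists n0 : nat, forall n : nat, (n0 <= n)%N ->
  forall F : {set {set 'I_n}},
    (forall S, S \in F -> `|(2 * #|S|)%:Z - n%:Z| ^+ 3 <= (8 * n ^ 2)%:Z) ->
    (forall S, S \in F -> (nabla F 1 S)%:R <= eps * n%:R) ->
    (forall S, S \in F -> forall j : nat, (2 <= j)%N ->
        (nabla F j S)%:R <= eps * (n%:R) ^+ 2) ->
    (#|F|%:R : R) <= (1 + 15 * eps) * ('C(n, n./2))%:R.
Proof.
move=> eps_gt0; exists (8 * 40 ^ 3)%N => n n_large F F_size nabla1 nablaj.
have F_window S : S \in F -> (80 * #|S| <= 41 * n)%N /\ (39 * n <= 80 * #|S|)%N.
  by move=> SF; apply: window_ratio n_large (F_size S SF).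
have above_le H : H \in F -> \sum_(G in F | H \proper G) pass_prob H G <= 15 * eps.
  by move=> HF; apply: sum_pass_prob_above_le => //; [lia | apply: nabla1 | apply: nablaj].
apply: le_trans (card_le_sum_pass_prob0 R F) _; rewrite ler_wpM2r //.
by apply: sum_pass_prob0_le above_le; lra.
Qed.
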